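(* Let $f:\mathcal{P}^n\to X$ be an onto, efficient, anonymous and tops-only rule. Then $f$ is NOM if and only if either $V_i=\emptyset$ for each $i\in N$, or there is $y\in X$ such that $SV_i=V_i=\{y\}$ for each $i\in N$.
   Context: $N=\{1,\dots,n\}$, $n\ge2$, agents; $X$ finite alternatives, $|X|\ge2$; $\mathcal{P}$ all strict linear orders on $X$; $t(P_i)$ the top of $P_i$. A rule $f:\mathcal{P}^n\to X$ is onto; tops-only if $f(P)=f(P')$ whenever all tops coincide; efficient if for each $P$ there is no $x$ with $xP_if(P)$ for all $i$; anonymous if $f(P_1,\dots,P_n)=f(P_{\sigma(1)},\dots,P_{\sigma(n)})$ for every permutation $\sigma$ of $N$. Option set $O^f(P_i)=\{f(P_i,P_{-i}):P_{-i}\in\mathcal{P}^{n-1}\}$. $P_i'$ is a manipulation at $P_i$ if $f(P_i',P_{-i})P_if(P_i,P_{-i})$ for some $P_{-i}$; it is obvious if the $P_i$-worst element of $O^f(P_i')$ is strictly $P_i$-better than that of $O^f(P_i)$, or the $P_i$-best element of $O^f(P_i')$ is strictly $P_i$-better than that of $O^f(P_i)$. $f$ is NOM if there are no obvious manipulations. Agent $i$ vetoes $x$ via $P_i$ if $x\notin O^f(P_i)$; $V_i$ = alternatives $i$ vetoes via some preference; $\mathcal{V}_i^x$ = preferences via which $i$ vetoes $x$; $i$ strongly vetoes $x$ if $\mathcal{V}_i^x=\{P_i:t(P_i)\ne x\}$; $SV_i$ = set of alternatives strongly vetoed by $i$. *)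

From mathcomp Require Import all_boot all_fingroup.
Set Implicit Arguments. Unset Strict Implicit. Unset Printing Implicit Defensive.

(* A strict linear order on a finite set X of alternatives.
   [prel P x y] means "x is strictly preferred to y under P". *)
Record pref (X : finType) := Pref {
  prel : rel X;
  prel_irr : irreflexive prel;
  prel_trans : transitive prel;
  prel_total : forall x y, x != y -> prel x y || prel y x }.

Section SCF.
Variables (n : nat) (X : finType).

Definition profile := 'I_n -> pref X.
Definition rule := profile -> X.

Definition is_top (P : pref X) (x : X) : Prop :=
  forall y, y != x -> prel P x y.

Definition upd (Q : profile) (i : 'I_n) (Pi : pref X) : profile :=
  fun j => if j == i then Pi else Q j.

Definition onto (f : rule) : Prop := forall x, exists P, f P = x.

Definition tops_only (f : rule) : Prop :=
  forall P P' : profile,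
    (forall i x, is_top (P i) x <-> is_top (P' i) x) -> f P = f P'.

Definition efficient (f : rule) : Prop :=
  forall P : profile, ~ exists x, forall i, prel (P i) x (f P).

Definition anonymous (f : rule) : Prop :=
  forall (P : profile) (s : {perm 'I_n}), f (fun i => P (s i)) = f P.

Definition option_set (f : rule) (i : 'I_n) (Pi : pref X) (x : X) : Prop :=
  exists Q : profile, f (upd Q i Pi) = x.

Definition is_worst (P : pref X) (S : X -> Prop) (w : X) : Prop :=
  S w /\ forall y, S y -> y != w -> prel P y w.
Definition is_best (P : pref X) (S : X -> Prop) (b : X) : Prop :=
  S b /\ forall y, S y -> y != b -> prel P b y.

Definition manipulation (f : rule) (i : 'I_n) (Pi Pi' : pref X) : Prop :=
  exists Q : profile, prel Pi (f (upd Q i Pi')) (f (upd Q i Pi)).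

Definition obvious_manipulation (f : rule) (i : 'I_n) (Pi Pi' : pref X) : Prop :=
  manipulation f i Pi Pi' /\
  ((exists w' w, is_worst Pi (option_set f i Pi') w' /\
                 is_worst Pi (option_set f i Pi) w /\ prel Pi w' w) \/
   (exists b' b, is_best Pi (option_set f i Pi') b' /\
                 is_best Pi (option_set f i Pi) b /\ prel Pi b' b)).

Definition NOM (f : rule) : Prop :=
  forall i Pi Pi', ~ obvious_manipulation f i Pi Pi'.

Definition vetoes (f : rule) (i : 'I_n) (x : X) : Prop :=
  exists Pi, ~ option_set f i Pi x.

Definition strongly_vetoes (f : rule) (i : 'I_n) (x : X) : Prop :=
  forall Pi, ~ option_set f i Pi x <-> ~ is_top Pi x.

End SCF.

From mathcomp Require Import all_boot all_fingroup.
From Stdlib Require Import Classical ClassicalEpsilon.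
Set Implicit Arguments. Unset Strict Implicit. Unset Printing Implicit Defensive.

(* Efficiency puts the top of P_i into O^f(P_i), so the best element of an
   option set is the top itself and an obvious manipulation must raise the
   worst element.  If i vetoes x via P_a while x is in O^f(P_b) for some P_b
   with top b <> x, then an agent with b first and x last (by tops-onlyness
   she has the option set of P_b) obviously manipulates by reporting P_a.
   So under NOM every veto is strong and, by anonymity, shared by all agents.
   Two distinct strongly vetoed x, y are impossible: when two agents rank
   x, y resp. y, x in the top two positions, efficiency selects x or y.
   Conversely, if y is the only (strongly) vetoed alternative, the worst
   element of O^f(P_i) belongs to every option set unless it is y, and then
   it is the top. *)

Section Preferences.
Variable X : finType.
Implicit Types (P : pref X) (a b c x y : X).

Lemma prel_asym P x y : prel P x y -> ~ prel P y x.
Proof. by move=> xy yx; have := prel_trans xy yx; rewrite prel_irr. Qed.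

Lemma top_not_below P a y : is_top P a -> ~ prel P y a.
Proof.
move=> atop; case: (eqVneq y a) => [->|ya]; first by rewrite prel_irr.
exact: prel_asym (atop y ya).
Qed.

Lemma top_uniq P a b : is_top P a -> is_top P b -> a = b.
Proof.
move=> atop btop; case: (eqVneq a b) => // ab.
by case: (top_not_below atop (btop a ab)).
Qed.

Lemma worst_not_above P (S : X -> Prop) w' w : is_worst P S w' -> S w -> ~ prel P w' w.
Proof.
case=> _ w'worst Sw; case: (eqVneq w w') => [->|ww']; first by rewrite prel_irr.
exact: prel_asym (w'worst w Sw ww').
Qed.

Definition rank P x := #|[pred y | prel P y x]|.

Lemma rank_lt P x y : prel P x y -> rank P x < rank P y.
Proof.
move=> xy; apply/proper_card/properP; split.
  by apply/subsetP => z; rewrite !inE => zx; exact: prel_trans zx xy.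
by exists x; rewrite !inE ?prel_irr.
Qed.

Lemma best_ex P (S : X -> Prop) : (exists x, S x) -> exists b, is_best P S b.
Proof.
case=> x0 Sx0; pose s x : bool := excluded_middle_informative (S x).
have sP x : reflect (S x) (s x) by rewrite /s; case: excluded_middle_informative; constructor.
case: (arg_minnP (rank P) (introT (sP x0) Sx0)) => b /sP Sb bmin.
exists b; split=> // y Sy yb; case/orP: (@prel_total _ P _ _ yb) => // /rank_lt.
by rewrite ltnNge bmin //; exact/sP.
Qed.

Lemma top_ex P x : exists a, is_top P a.
Proof.
have [a [_ abest]] := best_ex P (ex_intro (fun=> True) x I).
by exists a => y; exact: abest.
Qed.

Definition pref_rev P : pref X.
Proof.
apply: (@Pref X (fun x y => prel P y x)).
- exact: prel_irr.
- by move=> y x z xy yz; exact: prel_trans yz xy.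
- by move=> x y xy; rewrite orbC prel_total.
Defined.

Lemma worst_ex P (S : X -> Prop) : (exists x, S x) -> exists w, is_worst P S w.
Proof. exact: best_ex (pref_rev P) S. Qed.

Definition enum_pref : pref X.
Proof.
apply: (@Pref X (fun x y => enum_rank x < enum_rank y)).
- by move=> x; rewrite ltnn.
- by move=> y x z; exact: ltn_trans.
- by move=> x y xy; rewrite -neq_ltn (inj_eq val_inj) (inj_eq enum_rank_inj).
Defined.

Definition lift_top a P : pref X.
Proof.
apply: (@Pref X (fun x y => (y != a) && ((x == a) || prel P x y))).
- by move=> x; case: eqP => //= _; rewrite prel_irr.
- move=> y x z /andP[xa yx] /andP[za]; rewrite za (negbTE xa) /= => xz.
  by case/orP: yx => [-> // | yx]; rewrite (prel_trans yx xz) orbT.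
- move=> x y xy; case: (eqVneq x a) => [xa|xa]; first by rewrite -xa eq_sym xy.
  by case: (eqVneq y a) => [->|ya] /=; last exact: prel_total.
Defined.

Lemma lift_top_top a P : is_top (lift_top a P) a.
Proof. by move=> y ya; rewrite /= ya eqxx. Qed.

Lemma pref_top_second a b : exists P, is_top P a /\ forall y, y != a -> y != b -> prel P b y.
Proof.
exists (lift_top a (lift_top b enum_pref)); split; first exact: lift_top_top.
by move=> y ya yb; rewrite /= ya yb eqxx orbT.
Qed.

Lemma pref_top_bottom a c : a != c -> exists P, is_top P a /\ forall y, y != c -> prel P y c.
Proof.
move=> ac; exists (lift_top a (pref_rev (lift_top c enum_pref))).
split; first exact: lift_top_top.
by move=> y yc; rewrite /= eq_sym ac yc eqxx orbT.
Qed.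

End Preferences.

Section Rule.
Variables (n : nat) (X : finType) (f : rule n X).
Implicit Types (P Q : profile n X) (Pi : pref X).

Lemma option_set_nonempty i Pi : exists x, option_set f i Pi x.
Proof. by exists (f (upd (fun=> Pi) i Pi)); exists (fun=> Pi). Qed.

Lemma not_vetoes_option_set i x Pi : ~ vetoes f i x -> option_set f i Pi x.
Proof. by move=> xnveto; apply: NNPP => xPi; apply: xnveto; exists Pi. Qed.

Lemma strongly_vetoes_option_set_top i x Pi :
  strongly_vetoes f i x -> option_set f i Pi x -> is_top Pi x.
Proof. by move=> xsveto xPi; apply: NNPP => /(xsveto Pi).2. Qed.

Lemma strongly_vetoes_vetoes i x : 1 < #|X| -> strongly_vetoes f i x -> vetoes f i x.
Proof.
move=> X2 xsveto; have [b bx] : exists b, b != x.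
  case/card_gt1P: X2 => y [z [_ _ yz]].
  by case: (eqVneq y x) => [<-|yx]; [exists z; rewrite eq_sym | exists y].
exists (lift_top b (enum_pref X)); apply/xsveto => xtop.
by move/eqP: bx; apply; exact: top_uniq (lift_top_top _) xtop.
Qed.

Hypothesis f_eff : efficient f.

Lemma efficient_unanimous P a : (forall j, is_top (P j) a) -> f P = a.
Proof.
move=> atop; case: (eqVneq (f P) a) => // fa; exfalso.
by apply: (f_eff (P := P)); exists a => j; exact: atop j _ fa.
Qed.

Lemma option_set_top i Pi a : is_top Pi a -> option_set f i Pi a.
Proof.
by move=> atop; exists (fun=> Pi); apply: efficient_unanimous => j; rewrite /upd; case: ifP.
Qed.

Lemma option_set_best_top i Pi b : is_best Pi (option_set f i Pi) b -> is_top Pi b.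
Proof.
case=> _ bbest; have [a atop] := top_ex Pi b; suff -> : b = a by [].
case: (eqVneq b a) => // ba; have ab : a != b by rewrite eq_sym.
by case: (prel_asym (atop b ba) (bbest a (option_set_top i atop) ab)).
Qed.

Lemma NOM_of_worst_options :
  (forall i Pi Pi' w, is_worst Pi (option_set f i Pi) w ->
     is_top Pi w \/ option_set f i Pi' w) -> NOM f.
Proof.
move=> worst_kept i Pi Pi' [_ [[w' [w [w'worst [wworst w'w]]]] | [b' [b [_ [bbest b'b]]]]]].
- case: (worst_kept i Pi Pi' w wworst) => [wtop|wPi'].
    exact: top_not_below wtop w'w.
  exact: worst_not_above w'worst wPi' w'w.
- exact: top_not_below (option_set_best_top bbest) b'b.
Qed.

Hypothesis f_tops : tops_only f.

Lemma tops_only_ext P Q : (forall j, P j = Q j) -> f P = f Q.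
Proof. by move=> PQ; apply: f_tops => j x; rewrite PQ. Qed.

Lemma option_set_self i P : option_set f i (P i) (f P).
Proof. by exists P; apply: tops_only_ext => j; rewrite /upd; case: eqP => // ->. Qed.

Lemma option_set_same_top i Pi Pi' a x :
  is_top Pi a -> is_top Pi' a -> option_set f i Pi x -> option_set f i Pi' x.
Proof.
move=> atop atop' [Q <-]; exists Q; apply: f_tops => j b; rewrite /upd; case: eqP => // _.
by split=> btop; [rewrite (top_uniq btop atop') | rewrite (top_uniq btop atop)].
Qed.

Lemma strongly_vetoes_uniq x y : 1 < n ->
  (forall i, strongly_vetoes f i x) -> (forall i, strongly_vetoes f i y) -> x = y.
Proof.
move=> n2 xsveto ysveto; case: (eqVneq x y) => // xy; exfalso.
pose i : 'I_n := Ordinal (ltnW n2); pose j : 'I_n := Ordinal n2.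
have [A [Atop _]] := pref_top_second x y.
have [B [Btop Bx]] := pref_top_second y x.
pose R : profile n X := fun k => if k == j then B else A.
have [fRx|fRy] : f R = x \/ f R = y.
  case: (eqVneq (f R) x) => [|fx]; first by left.
  case: (eqVneq (f R) y) => [|fy]; first by right.
  exfalso; apply: (f_eff (P := R)); exists x => k; rewrite /R.
  by case: ifP => _; [exact: Bx | exact: Atop].
- have := option_set_self j R; rewrite fRx /R eqxx; apply/(xsveto j B) => xtop.
  by move/eqP: xy; apply; exact: top_uniq xtop Btop.
- have := option_set_self i R; rewrite fRy /R /=; apply/(ysveto i A) => ytop.
  by move/eqP: xy; apply; exact: top_uniq Atop ytop.
Qed.

Lemma NOM_vetoes_strongly i x : NOM f -> vetoes f i x -> strongly_vetoes f i x.
Proof.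
move=> fNOM [Pa xPa] Pb; split=> [xPb xtop | xtop xPb]; first exact/xPb/option_set_top.
have [b btop] := top_ex Pb x.
have bx : b != x by apply/eqP => bx; apply: xtop; rewrite -bx.
have [P [Ptop Pbot]] := pref_top_bottom bx.
have xP : option_set f i P x := option_set_same_top btop Ptop xPb.
have [w' w'worst] := worst_ex P (option_set_nonempty i Pa).
apply: (fNOM i P Pa); split.
  case: xP => Q fQ; exists Q; rewrite fQ; apply: Pbot.
  by apply/eqP => fQ'; apply: xPa; exists Q.
left; exists w', x; split=> //; split; first by split=> // y _; exact: Pbot.
apply: Pbot; apply/eqP => w'x; apply: xPa; rewrite -w'x; exact: w'worst.1.
Qed.

Hypothesis f_anon : anonymous f.

Lemma option_set_anon i j Pi x : option_set f i Pi x -> option_set f j Pi x.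
Proof.
case=> Q <-; exists (fun k => Q (tperm i j k)).
rewrite -(f_anon (upd Q i Pi) (tperm i j)); apply: tops_only_ext => k; rewrite /upd.
by rewrite (canF_eq (tpermK i j)) tpermL; case: ifP.
Qed.

Lemma vetoes_anon i j x : vetoes f i x -> vetoes f j x.
Proof. by case=> Pi xPi; exists Pi => /option_set_anon. Qed.

Lemma NOM_vetoes_all_strongly i j x : NOM f -> vetoes f i x -> strongly_vetoes f j x.
Proof. by move=> fNOM /(vetoes_anon j); exact: NOM_vetoes_strongly. Qed.

End Rule.

Theorem corollary2 (n : nat) (X : finType) (f : rule n X) :
  1 < n -> 1 < #|X| ->
  onto f -> efficient f -> anonymous f -> tops_only f ->
  (NOM f <->
   ((forall i x, ~ vetoes f i x) \/
    (exists y : X, forall i : 'I_n,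
        (forall x, strongly_vetoes f i x <-> x = y) /\
        (forall x, vetoes f i x <-> x = y)))).
Proof.
move=> n2 X2 _ f_eff f_anon f_tops; split=> [fNOM|].
- case: (classic (exists i x, vetoes f i x)) => [[i0 [y yveto]]|noveto]; last first.
    by left=> i x xveto; apply: noveto; exists i, x.
  have ysveto j : strongly_vetoes f j y.
    exact: (NOM_vetoes_all_strongly f_eff f_tops f_anon j fNOM yveto).
  have vetoed_y j x : vetoes f j x -> x = y.
    move=> xveto; apply: (strongly_vetoes_uniq f_eff f_tops n2 _ ysveto) => k.
    exact: (NOM_vetoes_all_strongly f_eff f_tops f_anon k fNOM xveto).
  right; exists y => i; split=> x; split.
  + by move/(strongly_vetoes_vetoes X2); exact: vetoed_y.
  + by move=> ->.
  + exact: vetoed_y.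
  + by move=> ->; exact: (vetoes_anon f_tops f_anon i yveto).
- case=> [noveto | [y vetoes_y]]; apply: NOM_of_worst_options f_eff _ => i Pi Pi' w wworst.
    by right; exact: not_vetoes_option_set.
  have [ysveto yveto] := vetoes_y i.
  case: (eqVneq w y) => [wy|wy]; [left | right].
    by apply: strongly_vetoes_option_set_top ((ysveto w).2 wy) wworst.1.
  by apply: not_vetoes_option_set => /yveto /eqP; exact/negP.
Qed.
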